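(* Let $d,k,\ell,T$ be positive integers with $2k\le d$, let $\mathbf{X}_1,\dots,\mathbf{X}_T\in\mathbb{R}^{d\times\ell}$ and $t_1,\dots,t_T\in(0,1]$. Let $(\mathbf{H}^{(n)},\mathbf{Y}^{(n)},\boldsymbol{\Theta}^{(n)})_{n\ge 0}$ be the iterates produced by the Geodesic Subspace Estimation algorithm (described in the context) from any initialization with $[\mathbf{H}^{(0)}\ \mathbf{Y}^{(0)}]\in\mathrm{St}(d,2k)$ and $\boldsymbol{\Theta}^{(0)}$ real diagonal, and let $\mathbf{U}^{(n)}(t)=\mathbf{H}^{(n)}\cos(\boldsymbol{\Theta}^{(n)}t)+\mathbf{Y}^{(n)}\sin(\boldsymbol{\Theta}^{(n)}t)$. Then for every $n\ge 1$, $$\mathcal{L}(\mathbf{U}^{(n)})\le \mathcal{L}(\mathbf{U}^{(n-1)}),$$ i.e. the loss is monotonically non-increasing along the iterates.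
   Context: $\mathrm{St}(d,p)=\{\mathbf{Q}\in\mathbb{R}^{d\times p}:\mathbf{Q}^\top\mathbf{Q}=\mathbf{I}_p\}$. For $\mathbf{H},\mathbf{Y}\in\mathbb{R}^{d\times k}$ and a real diagonal $k\times k$ matrix $\boldsymbol{\Theta}=\mathrm{diag}(\theta_1,\dots,\theta_k)$, set $\mathbf{U}(t)=\mathbf{H}\cos(\boldsymbol{\Theta}t)+\mathbf{Y}\sin(\boldsymbol{\Theta}t)$ (matrix cosine/sine of a diagonal matrix act entrywise on the diagonal) and define the loss $$\mathcal{L}(\mathbf{U})=\mathcal{L}(\mathbf{H},\mathbf{Y},\boldsymbol{\Theta})=-\sum_{i=1}^T\|\mathbf{X}_i^\top\mathbf{U}(t_i)\|_F^2$$ (which, when $[\mathbf{H}\ \mathbf{Y}]\in\mathrm{St}(d,2k)$, equals $\min_{\mathbf{G}_i}\sum_i\|\mathbf{X}_i-\mathbf{U}(t_i)\mathbf{G}_i\|_F^2$ minus the constant $\sum_i\|\mathbf{X}_i\|_F^2$). For $a\in\mathbb{R},p>0$, $\mathrm{mod}(a,p)=a-p\lfloor a/p\rfloor\in[0,p)$; $\arctan2(y,x)$ is the angle of $(x,y)$ measured counter-clockwise from the positive $x$-axis. Algorithm (Geodesic Subspace Estimation), with $M\ge1$ inner iterations. For $n=1,2,\dots$: (i) ($\mathbf{H},\mathbf{Y}$ update) Let $\mathbf{U}_i=\mathbf{U}^{(n-1)}(t_i)$, $\mathbf{G}_i=\mathbf{U}_i^\top\mathbf{X}_i$, $\mathbf{M}=\sum_{i=1}^T[\mathbf{X}_i\mathbf{G}_i^\top\cos(\boldsymbol{\Theta}^{(n-1)}t_i)\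 \ \mathbf{X}_i\mathbf{G}_i^\top\sin(\boldsymbol{\Theta}^{(n-1)}t_i)]\in\mathbb{R}^{d\times 2k}$, take a thin SVD $\mathbf{M}=\mathbf{W}\boldsymbol{\Sigma}\mathbf{V}^\top$ and set $[\mathbf{H}^{(n)}\ \mathbf{Y}^{(n)}]=\mathbf{W}\mathbf{V}^\top$. (ii) ($\boldsymbol{\Theta}$ update) With $\mathbf{H}=\mathbf{H}^{(n)},\mathbf{Y}=\mathbf{Y}^{(n)}$, for each $j=1,\dots,k$ and $i=1,\dots,T$ put $\alpha_{i,j}=[\mathbf{H}^\top\mathbf{X}_i\mathbf{X}_i^\top\mathbf{H}]_{jj}$, $\beta_{i,j}=[\mathbf{Y}^\top\mathbf{X}_i\mathbf{X}_i^\top\mathbf{H}]_{jj}$, $\gamma_{i,j}=[\mathbf{Y}^\top\mathbf{X}_i\mathbf{X}_i^\top\mathbf{Y}]_{jj}$, $\phi_{i,j}=\arctan2(\beta_{i,j},(\alpha_{i,j}-\gamma_{i,j})/2)$, $r_{i,j}=\sqrt{((\alpha_{i,j}-\gamma_{i,j})/2)^2+\beta_{i,j}^2}$. Define $f'_{i,j}(\theta)=2r_{i,j}t_i\sin(2\theta t_i-\phi_{i,j})$ and the curvature $w_{i,j}(\theta)=f'_{i,j}(\theta)\big/\big(\mathrm{mod}(\theta-\tfrac{\phi_{i,j}}{2t_i}+\tfrac{\pi}{2t_i},\tfrac{2\pi}{2t_i})-\tfrac{\pi}{2t_i}\big)$ when the denominator is nonzero, and $w_{i,j}(\theta)=4t_i^2r_{i,j}$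 when $\theta\in\{(\phi_{i,j}+2\pi m)/(2t_i):m\in\mathbb{Z}\}$. Starting from $\theta_j^{(n,0)}=\theta_j^{(n-1)}$, for $m=1,\dots,M$ set $\theta_j^{(n,m)}=\theta_j^{(n,m-1)}-\frac{\sum_i f'_{i,j}(\theta_j^{(n,m-1)})}{\sum_i w_{i,j}(\theta_j^{(n,m-1)})}$ (with the convention $\theta_j^{(n,m)}=\theta_j^{(n,m-1)}$ if the denominator is $0$). Finally $\boldsymbol{\Theta}^{(n)}=\mathrm{diag}(\theta_1^{(n,M)},\dots,\theta_k^{(n,M)})$. *)

From HB Require Import structures.
From mathcomp Require Import all_boot all_order all_algebra.
From mathcomp Require Import all_classical all_reals all_analysis.
Set Implicit Arguments. Unset Strict Implicit. Unset Printing Implicit Defensive.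
Import Order.TTheory GRing.Theory Num.Theory.
Local Open Scope ring_scope.

Section GSE.
Variable R : realType.

Definition arctan2 (y x : R) : R :=
  if 0 < x then atan (y / x)
  else if x < 0 then (if 0 <= y then atan (y / x) + pi else atan (y / x) - pi)
  else if 0 < y then pi / 2 else if y < 0 then - (pi / 2) else 0.

Definition rmod (a p : R) : R := a - p * (Num.floor (a / p))%:~R.

Definition frob2 m n (A : 'M[R]_(m, n)) : R := \sum_i \sum_j (A i j) ^+ 2.

Definition stiefel d p (Q : 'M[R]_(d, p)) : Prop := Q^T *m Q = 1%:M.

Definition cosD k (th : 'rV[R]_k) (t : R) : 'M[R]_k :=
  diag_mx (\row_j cos (th 0 j * t)).
Definition sinD k (th : 'rV[R]_k) (t : R) : 'M[R]_k :=
  diag_mx (\row_j sin (th 0 j * t)).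

Definition Ugeo d k (H Y : 'M[R]_(d, k)) (th : 'rV[R]_k) (t : R) : 'M[R]_(d, k) :=
  H *m cosD th t + Y *m sinD th t.

Definition loss d k l T (X : 'I_T -> 'M[R]_(d, l)) (ts : 'I_T -> R)
  (H Y : 'M[R]_(d, k)) (th : 'rV[R]_k) : R :=
  - \sum_i frob2 ((X i)^T *m Ugeo H Y th (ts i)).

Definition Mmat d k l T (X : 'I_T -> 'M[R]_(d, l)) (ts : 'I_T -> R)
  (H Y : 'M[R]_(d, k)) (th : 'rV[R]_k) : 'M[R]_(d, k + k) :=
  \sum_i (let G := (Ugeo H Y th (ts i))^T *m X i in
          row_mx (X i *m G^T *m cosD th (ts i)) (X i *m G^T *m sinD th (ts i))).

Definition thin_svd d p (A W : 'M[R]_(d, p)) (S V : 'M[R]_p) : Prop :=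
  [/\ stiefel W, V^T *m V = 1%:M, is_diag_mx S,
      (forall i, 0 <= S i i) & A = W *m S *m V^T].

Definition alphaq d k l (X : 'M[R]_(d, l)) (H Y : 'M[R]_(d, k)) j : R :=
  (H^T *m X *m X^T *m H) j j.
Definition betaq d k l (X : 'M[R]_(d, l)) (H Y : 'M[R]_(d, k)) j : R :=
  (Y^T *m X *m X^T *m H) j j.
Definition gammaq d k l (X : 'M[R]_(d, l)) (H Y : 'M[R]_(d, k)) j : R :=
  (Y^T *m X *m X^T *m Y) j j.
Definition phiq d k l (X : 'M[R]_(d, l)) (H Y : 'M[R]_(d, k)) j : R :=
  arctan2 (betaq X H Y j) ((alphaq X H Y j - gammaq X H Y j) / 2).
Definition rq d k l (X : 'M[R]_(d, l)) (H Y : 'M[R]_(d, k)) j : R :=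
  Num.sqrt (((alphaq X H Y j - gammaq X H Y j) / 2) ^+ 2 + (betaq X H Y j) ^+ 2).

Definition fder d k l (X : 'M[R]_(d, l)) (t : R) (H Y : 'M[R]_(d, k)) j (th : R) : R :=
  2 * rq X H Y j * t * sin (2 * th * t - phiq X H Y j).

Definition wcurv d k l (X : 'M[R]_(d, l)) (t : R) (H Y : 'M[R]_(d, k)) j (th : R) : R :=
  let den := rmod (th - phiq X H Y j / (2 * t) + pi / (2 * t)) (2 * pi / (2 * t))
             - pi / (2 * t) in
  if den != 0 then fder X t H Y j th / den else 4 * t ^+ 2 * rq X H Y j.

Definition theta_step d k l T (X : 'I_T -> 'M[R]_(d, l)) (ts : 'I_T -> R)
  (H Y : 'M[R]_(d, k)) j (th : R) : R :=
  let num := \sum_i fder (X i) (ts i) H Y j th in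
  let den := \sum_i wcurv (X i) (ts i) H Y j th in
  if den == 0 then th else th - num / den.

Definition theta_update d k l T (X : 'I_T -> 'M[R]_(d, l)) (ts : 'I_T -> R)
  (Minner : nat) (H Y : 'M[R]_(d, k)) (th_prev : 'rV[R]_k) : 'rV[R]_k :=
  \row_j iter Minner (theta_step X ts H Y j) (th_prev 0 j).

Definition gse_iterates d k l T (X : 'I_T -> 'M[R]_(d, l)) (ts : 'I_T -> R)
  (Minner : nat) (H Y : nat -> 'M[R]_(d, k)) (th : nat -> 'rV[R]_k) : Prop :=
  forall n : nat, (1 <= n)%N ->
    (exists (W : 'M[R]_(d, k + k)) (S V : 'M[R]_(k + k)),
       thin_svd (Mmat X ts (H n.-1) (Y n.-1) (th n.-1)) W S V /\
       row_mx (H n) (Y n) = W *m V^T)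
    /\ th n = theta_update X ts Minner (H n) (Y n) (th n.-1).

End GSE.

(* One outer iteration is a block-coordinate descent on the loss L(H, Y, Theta),
   and each block update provably does not increase L:

   - (H, Y)-update.  Writing Q = [H Y] and B_i = [cos(Theta t_i); sin(Theta t_i)],
     we have U(t_i) = Q B_i.  Expanding a square gives, for every Q',
     |X_i^T Q' B_i|^2 >= 2 <X_i^T Q B_i, X_i^T Q' B_i> - |X_i^T Q B_i|^2, and the
     sum of the cross terms is tr(M^T Q').  If M = W S V^T is a thin SVD, then
     tr(M^T Q') = sum_q S_qq (W^T Q' V)_qq, whose diagonal entries are at most 1
     when Q' is orthonormal (Cauchy-Schwarz); hence the polar factor W V^T
     maximises it over the Stiefel manifold, and L does not increase.

   - Theta-update.  By harmonic addition, L splits coordinatewise as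
     sum_j sum_i (-(alpha+gamma)/2 - r cos(2 theta_j t_i - phi)).  Each term
     -r cos(2 theta t - phi) is majorised at theta by the quadratic with slope f'
     and curvature w; this is the inequality
        -cos y <= -cos z + sin z (y - z) + sin z / (2z) (y - z)^2   (|z| <= pi),
     applied to the representative z in [-pi, pi) of the angle selected by the
     mod in the definition of w.  Minimising the summed majorant is exactly the
     inner step, so each inner step (hence M of them) does not increase L. *)
From Pilot Require Import Defs.
From HB Require Import structures.
From mathcomp Require Import all_boot all_order all_algebra.
From mathcomp Require Import all_classical all_reals all_analysis.
From mathcomp Require Import ring lra.
Import Order.TTheory GRing.Theory Num.Theory numFieldNormedType.Exports.
Local Open Scope ring_scope.
Local Open Scope classical_set_scope.

Section TrigInequalities.
Context {R : realType}.

Let scaleRE (a b : R) : a *: b = a * b. Proof. by []. Qed.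

Lemma ler_derive_ge0 (f df : R -> R) (a b : R) :
  a <= b -> (forall x, a <= x <= b -> is_derive x 1 f (df x)) ->
  (forall x, a < x < b -> 0 <= df x) -> f a <= f b.
Proof.
move=> ab hd hpos.
case: (ltgtP a b) ab => // [altb|->] _; last by [].
have cf : {within `[a, b], continuous f}.
  apply: (@continuous_in_subspaceT R R) => x; rewrite inE /= in_itv /= => xab.
  apply: differentiable_continuous; apply/derivable1_diffP.
  by apply: ex_derive; apply: hd.
have [c cab E] : exists2 c, c \in `]a, b[%R & f b - f a = df c * (b - a).
  apply: MVT altb _ cf => x; rewrite in_itv /= => /andP[h1 h2].
  by apply: hd; rewrite !ltW.
rewrite -subr_ge0 E; apply: mulr_ge0; last by rewrite subr_ge0 ltW.
by apply: hpos; move: cab; rewrite in_itv.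
Qed.

Lemma ler_derive_le0 (f df : R -> R) (a b : R) :
  a <= b -> (forall x, a <= x <= b -> is_derive x 1 f (df x)) ->
  (forall x, a < x < b -> df x <= 0) -> f b <= f a.
Proof.
move=> ab hd hn.
have := @ler_derive_ge0 (- f) (fun x => - df x) a b ab.
rewrite !fctE lerN2; apply.
  by move=> x hx; apply: is_deriveN; apply: hd.
by move=> x hx; rewrite oppr_ge0; apply: hn.
Qed.

Lemma sin_le_id (y : R) : 0 <= y -> sin y <= y.
Proof.
move=> y0.
have := @ler_derive_ge0 (id - sin) (fun x => 1 - cos x) 0 y y0.
rewrite /= !fctE sin0 subr0 subr_ge0; apply.
  by move=> x _; rewrite subr_ge0 cos_le1.
Qed.

(* Second-order Taylor lower bound for the cosine; it is the curvature bound
   used by the majorant when the reduced angle is 0. *)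
Lemma cos_ge_quad (y : R) : 1 - y ^+ 2 / 2 <= cos y.
Proof.
wlog y0 : y / 0 <= y.
  move=> H; case: (lerP 0 y) => [/H//|y0].
  by rewrite -cosN -sqrrN; apply: H; rewrite oppr_ge0 ltW.
have hd : forall x, 0 <= x <= y ->
    is_derive x 1 (cos + (2^-1 : R) \*: (id * id)) (x - sin x).
  by move=> x _; apply: is_derive_eq; rewrite !scaleRE mulr1; lra.
have hp : forall x, 0 < x < y -> 0 <= x - sin x.
  by move=> x /andP[x0 _]; rewrite subr_ge0 sin_le_id // ltW.
have := @ler_derive_ge0 _ _ 0 y y0 hd hp.
rewrite !fctE /= !scaleRE cos0 mul0r mulr0 addr0 expr2; lra.
Qed.

Lemma xcos_le_sin (y : R) : 0 <= y <= pi -> y * cos y <= sin y.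
Proof.
move=> /andP[y0 ypi].
have := @ler_derive_ge0 (sin - id * cos) (fun x => x * sin x) 0 y y0.
rewrite !fctE /= sin0 mul0r subr0 subr_ge0; apply.
  move=> x _; apply: is_derive_eq; rewrite !scaleRE; ring.
move=> x /andP[x0 xy]; apply: mulr_ge0; first exact: ltW.
by apply: sin_ge0_pi; rewrite ltW //= (le_trans (ltW xy)).
Qed.

(* sin x / x is nonincreasing on (0, pi], written without division. *)
Lemma sinc_nonincr (y z : R) : 0 < y -> y <= z -> z <= pi ->
  y * sin z <= z * sin y.
Proof.
move=> y0 yz zpi.
have z0 : 0 < z by apply: lt_le_trans yz.
have hd : forall x, y <= x <= z ->
    is_derive x 1 (sin * (fun u => (@id R u)^-1)) (sin x * (- x ^- 2) + x^-1 * cos x).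
  move=> x /andP[yx _].
  have x0 : 0 < x by apply: lt_le_trans yx.
  have hv := @is_deriveV R id x 1 1 (lt0r_neq0 x0) (is_derive_id x 1).
  by apply: is_derive_eq (is_deriveM (is_derive_sin x) hv) _; rewrite !scaleRE mulr1.
have sinc_zy : sin z * z^-1 <= sin y * y^-1.
  apply: (@ler_derive_le0 _ _ y z yz hd) => x /andP[yx xz].
  have x0 : 0 < x by apply: lt_trans yx.
  have hx : x * cos x <= sin x by apply: xcos_le_sin; rewrite ltW //= (le_trans (ltW xz)).
  have -> : sin x * - x ^- 2 + x^-1 * cos x = (x * cos x - sin x) / x ^+ 2.
    by field; rewrite lt0r_neq0.
  by apply: mulr_le0_ge0; rewrite ?subr_le0 // invr_ge0 exprn_ge0 // ltW.
rewrite -(ler_pM2r (mulr_gt0 y0 z0)) in sinc_zy.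
move: sinc_zy.
have -> : sin z * z^-1 * (y * z) = y * sin z by field; rewrite lt0r_neq0.
by have -> : sin y * y^-1 * (y * z) = z * sin y by field; rewrite lt0r_neq0.
Qed.

(* The majorisation inequality for the cosine at a point 0 < z <= pi, stated as
   "z minimises cos y + c y^2 over y >= 0" with c = sin z / (2z). *)
Lemma cos_quad_min_pos (z y : R) : 0 < z -> z <= pi -> 0 <= y ->
  cos z + sin z / (2 * z) * z ^+ 2 <= cos y + sin z / (2 * z) * y ^+ 2.
Proof.
move=> z0 zpi y0.
set c := sin z / (2 * z).
have c0 : 0 <= c.
  apply: divr_ge0; first by apply: sin_ge0_pi; rewrite ltW.
  by apply: mulr_ge0 => //; apply: ltW.
have hd : forall x : R, is_derive x 1 (cos + c \*: (id * id)) (c * (x + x) - sin x).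
  by move=> x; apply: is_derive_eq; rewrite !scaleRE mulr1; ring.
have slopeE : forall x, 0 < x -> c * (x + x) = x * sin z / z.
  by move=> x x0; rewrite /c; field; rewrite lt0r_neq0.
have right_of_z : forall w, z <= w -> w <= pi -> cos z + c * z ^+ 2 <= cos w + c * w ^+ 2.
  move=> w zw wpi.
  have := @ler_derive_ge0 _ _ z w zw (fun x _ => hd x).
  rewrite !fctE /= !scaleRE -!expr2; apply => x /andP[zx xw].
  have x0 : 0 < x by apply: lt_trans zx.
  have := @sinc_nonincr z x z0 (ltW zx) (le_trans (ltW xw) wpi).
  rewrite slopeE // subr_ge0 ler_pdivlMr //; lra.
case: (lerP y z) => [yz|zy].
  have := @ler_derive_le0 _ _ y z yz (fun x _ => hd x).
  rewrite !fctE /= !scaleRE -!expr2; apply => x /andP[yx xz].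
  have x0 : 0 < x by apply: le_lt_trans yx.
  have := @sinc_nonincr x z x0 (ltW xz) zpi.
  rewrite slopeE // subr_le0 ler_pdivrMr //; lra.
case: (lerP y pi) => [ypi|piy]; first by apply: right_of_z => //; rewrite ltW.
apply: le_trans (right_of_z pi zpi (lexx _)) _.
rewrite cospi; apply: lerD; first exact: cos_geN1.
apply: ler_wpM2l => //; rewrite ler_sqr ?nnegrE ?pi_ge0 ?ltW //.
exact: lt_trans z0 zy.
Qed.

(* Quadratic majorant of -cos at any nonzero z in [-pi, pi], with curvature
   sin z / z; the linear term is absorbed in the completed square. *)
Lemma cos_quad_min (z y : R) : - pi <= z -> z <= pi -> z != 0 ->
  cos z + sin z / (2 * z) * z ^+ 2 <= cos y + sin z / (2 * z) * y ^+ 2.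
Proof.
move=> z1 z2 zn0.
wlog y0 : y / 0 <= y.
  move=> H; case: (lerP 0 y) => [/H//|y0].
  by rewrite -(cosN y) -(sqrrN y); apply: H; rewrite oppr_ge0 ltW.
case: (ltgtP 0 z) zn0 => // [z0|z0] _; first exact: cos_quad_min_pos.
have := @cos_quad_min_pos (- z) y; rewrite oppr_gt0 z0 -lerNl => /(_ isT z1 y0).
have -> : sin (- z) / (2 * - z) = sin z / (2 * z) by rewrite sinN mulrN invrN mulrNN.
by rewrite cosN sqrrN.
Qed.

Lemma cos_2piz (x : R) (m : int) : cos (x + 2 * pi * m%:~R) = cos x.
Proof.
have P : forall (y : R) n, cos (y + 2 * pi * n%:R) = cos y.
  move=> y n; rewrite -(periodicn (@cosD2pi R) n y).
  by congr (_ (_ + _)); rewrite -mulrnA -[RHS]mulr_natr natrM; ring.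
case: m => n; first by rewrite P.
by rewrite NegzE mulrNz mulrN -(P (x - 2 * pi * (n.+1)%:R) n.+1) /= subrK.
Qed.

Lemma sin_2piz (x : R) (m : int) : sin (x + 2 * pi * m%:~R) = sin x.
Proof.
have P : forall (y : R) n, sin (y + 2 * pi * n%:R) = sin y.
  move=> y n; rewrite -(periodicn (@sinD2pi R) n y).
  by congr (_ (_ + _)); rewrite -mulrnA -[RHS]mulr_natr natrM; ring.
case: m => n; first by rewrite P.
by rewrite NegzE mulrNz mulrN -(P (x - 2 * pi * (n.+1)%:R) n.+1) /= subrK.
Qed.

End TrigInequalities.

Section ThetaStep.
Context {R : realType}.

(* Scalar versions of f'_{i,j} and w_{i,j}, for amplitude r, phase phi and time t;
   [fder] and [wcurv] of the algorithm unfold to them. *)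
Definition slope (r phi t th : R) : R := 2 * r * t * sin (2 * th * t - phi).

Definition curvature (r phi t th : R) : R :=
  let den := rmod (th - phi / (2 * t) + pi / (2 * t)) (2 * pi / (2 * t))
             - pi / (2 * t) in
  if den != 0 then slope r phi t th / den else 4 * t ^+ 2 * r.

Lemma wrap_angle (phi t th : R) : 0 < t ->
  let den := rmod (th - phi / (2 * t) + pi / (2 * t)) (2 * pi / (2 * t))
             - pi / (2 * t) in
  [/\ - pi <= 2 * t * den, 2 * t * den < pi &
      exists m : int, 2 * th * t - phi = 2 * t * den + 2 * pi * m%:~R].
Proof.
move=> t0 den.
set a := th - phi / (2 * t) + pi / (2 * t).
set p := 2 * pi / (2 * t).
have tn0 : t != 0 by rewrite lt0r_neq0.
have tt : 0 < 2 * t by rewrite mulr_gt0.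
have p0 : 0 < p by rewrite /p divr_gt0 ?mulr_gt0 ?pi_gt0.
have hf1 := floor_le (a / p).
have hf2 := floorD1_gt (a / p); rewrite intrD in hf2.
set m := Num.floor (a / p) in hf1 hf2.
have denE : 2 * t * den = 2 * t * a - 2 * pi * m%:~R - pi.
  have -> : den = a - p * m%:~R - pi / (2 * t) by [].
  by rewrite /p; field; rewrite ?tn0.
have aE : 2 * t * a = 2 * th * t - phi + pi by rewrite /a; field; rewrite ?tn0.
have hpm : 2 * t * (p * m%:~R) = 2 * pi * m%:~R by rewrite /p; field; rewrite ?tn0.
have hp : 2 * t * p = 2 * pi by rewrite /p; field; rewrite ?tn0.
have lo : 2 * t * (p * m%:~R) <= 2 * t * a.
  by rewrite ler_pM2l // mulrC -ler_pdivlMr.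
have hi : 2 * t * a < 2 * t * (p * m%:~R) + 2 * t * p.
  by rewrite -mulrDr ltr_pM2l // -[X in _ + X]mulr1 -mulrDr mulrC -ltr_pdivrMr.
rewrite hpm in lo hi; rewrite hp in hi.
split; [by rewrite denE; lra | by rewrite denE; lra | exists m].
by rewrite denE aE; ring.
Qed.

Lemma cos_term_majorant (r phi t th th' : R) : 0 <= r -> 0 < t ->
  0 <= curvature r phi t th /\
  - r * cos (2 * th' * t - phi) <=
  - r * cos (2 * th * t - phi) + slope r phi t th * (th' - th)
  + curvature r phi t th / 2 * (th' - th) ^+ 2.
Proof.
move=> r0 t0.
have [h1 h2 [m em]] := wrap_angle phi t th t0.
rewrite /curvature /slope.
set den := rmod _ _ - _ in h1 h2 em *.
have tn0 : t != 0 by rewrite lt0r_neq0.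
set z := 2 * t * den in h1 h2 em.
set s := th' - th.
have em' : 2 * th' * t - phi = (z + 2 * t * s) + 2 * pi * m%:~R.
  have -> : 2 * th' * t - phi = (2 * th * t - phi) + 2 * t * s by rewrite /s; ring.
  by rewrite em; ring.
rewrite em' em !cos_2piz sin_2piz.
case: eqP => [d0|/eqP dn0] /=.
  have z0 : z = 0 by rewrite /z d0 mulr0.
  rewrite z0 sin0 cos0 !mulr0 !mul0r !add0r.
  split; first by rewrite mulr_ge0 // mulr_ge0 // sqr_ge0.
  have h := ler_wpM2l r0 (cos_ge_quad (2 * t * s)).
  rewrite !mulNr; lra.
have zn0 : z != 0 by rewrite /z mulf_neq0 // mulf_neq0.
split.
  rewrite -mulrA; apply: mulr_ge0; first by rewrite !mulr_ge0 // ltW.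
  case: (ltgtP 0 den) dn0 => // [dp|dn] _.
    apply: divr_ge0; last exact: ltW.
    by apply: sin_ge0_pi; rewrite ltW ?ltW // /z mulr_gt0 // mulr_gt0.
  rewrite -(mulrNN (sin z)) -invrN; apply: divr_ge0; last by rewrite oppr_ge0 ltW.
  rewrite -sinN; apply: sin_ge0_pi; rewrite lerNl h1 andbT oppr_ge0.
  by rewrite /z pmulr_rle0 ?mulr_gt0 // ltW.
have key := cos_quad_min z (z + 2 * t * s) h1 (ltW h2) zn0.
have E : - cos (z + 2 * t * s) <=
    - cos z + sin z * (2 * t * s) + sin z / (2 * z) * (2 * t * s) ^+ 2.
  have -> : - cos z + sin z * (2 * t * s) + sin z / (2 * z) * (2 * t * s) ^+ 2
      = - cos z + sin z / (2 * z) * ((z + 2 * t * s) ^+ 2 - z ^+ 2) by field.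
  lra.
apply: le_trans (_ : r * (- cos z + sin z * (2 * t * s)
                          + sin z / (2 * z) * (2 * t * s) ^+ 2) <= _).
  by rewrite mulNr -mulrN; apply: ler_wpM2l.
rewrite le_eqVlt; apply/orP; left; apply/eqP.
by rewrite /z; field; rewrite ?tn0 ?dn0.
Qed.

(* Majorisation-minimisation: the damped Newton step th - G/W on a sum of
   cosine terms, with G and W the summed slopes and curvatures, does not
   increase the sum (it minimises the summed quadratic majorant). *)
Lemma mm_step_nonincr (T : nat) (r phi ts : 'I_T -> R) (th : R) :
  (forall i, 0 <= r i) -> (forall i, 0 < ts i) ->
  forall (F : R -> R) G W, (forall x, F x = \sum_i - r i * cos (2 * x * ts i - phi i)) ->
  G = \sum_i slope (r i) (phi i) (ts i) th ->
  W = \sum_i curvature (r i) (phi i) (ts i) th ->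
  F (if W == 0 then th else th - G / W) <= F th.
Proof.
move=> r0 t0 F G W hF hG hW.
have maj : forall th', F th' <= F th + G * (th' - th) + W / 2 * (th' - th) ^+ 2.
  move=> th'; rewrite !hF hG hW !mulr_suml -!big_split /=.
  by apply: ler_sum => i _; case: (cos_term_majorant (r i) (phi i) (ts i) th th' (r0 i) (t0 i)).
have W0 : 0 <= W.
  rewrite hW; apply: sumr_ge0 => i _.
  by case: (cos_term_majorant (r i) (phi i) (ts i) th th (r0 i) (t0 i)).
case: eqP => [//|/eqP Wn0].
apply: le_trans (maj _) _.
have Wp : 0 < W by rewrite lt_def Wn0 W0.
rewrite -addrA.
have -> : G * (th - G / W - th) + W / 2 * (th - G / W - th) ^+ 2 = - (G ^+ 2 / (2 * W)).
  by field.
by rewrite -[X in _ <= X]addr0 lerD2l oppr_le0 divr_ge0 ?sqr_ge0 // mulr_ge0 // ltW.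
Qed.

End ThetaStep.

Lemma iter_nonincr (R : realType) (f F : R -> R) (n : nat) (x : R) :
  (forall y, F (f y) <= F y) -> F (iter n f x) <= F x.
Proof. by move=> h; elim: n => [|n IH] //=; exact: le_trans (h _) IH. Qed.

Section HarmonicAddition.
Context {R : realType}.

Lemma sin_atan_cos (u : R) : sin (atan u) = u * cos (atan u).
Proof.
have c0 : cos (atan u) != 0.
  by rewrite cos_atan invr_neq0 // lt0r_neq0 // sqrtr_gt0 ltr_pwDl ?ltr01 ?sqr_ge0.
by rewrite -{2}(atanK u) /tan divfK.
Qed.

Lemma sqrt_sum_sqr (x y : R) : x != 0 ->
  Num.sqrt (x ^+ 2 + y ^+ 2) = `|x| * Num.sqrt (1 + (y / x) ^+ 2).
Proof.
move=> xn0; have -> : x ^+ 2 + y ^+ 2 = x ^+ 2 * (1 + (y / x) ^+ 2) by field.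
by rewrite sqrtrM ?sqr_ge0 // sqrtr_sqr.
Qed.

Lemma arctan2_polar (y x : R) :
  Num.sqrt (x ^+ 2 + y ^+ 2) * cos (arctan2 y x) = x /\
  Num.sqrt (x ^+ 2 + y ^+ 2) * sin (arctan2 y x) = y.
Proof.
rewrite /arctan2.
have cA : forall u : R, Num.sqrt (1 + u ^+ 2) * cos (atan u) = 1.
  move=> u; rewrite cos_atan divff // lt0r_neq0 // sqrtr_gt0.
  by rewrite ltr_pwDl ?ltr01 ?sqr_ge0.
case: (ltrP 0 x) => [xp|xn].
  rewrite sqrt_sum_sqr ?lt0r_neq0 // ger0_norm ?ltW // -mulrA cA mulr1; split => //.
  rewrite sin_atan_cos.
  have -> : x * Num.sqrt (1 + (y / x) ^+ 2) * (y / x * cos (atan (y / x)))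
      = x * (y / x) * (Num.sqrt (1 + (y / x) ^+ 2) * cos (atan (y / x))) by ring.
  by rewrite cA mulr1 mulrC divfK // lt0r_neq0.
case: (ltrP x 0) => [xn'|xp].
  have xn0 : x != 0 by rewrite ltr0_neq0.
  have Q : - x * Num.sqrt (1 + (y / x) ^+ 2) * - cos (atan (y / x)) = x /\
           - x * Num.sqrt (1 + (y / x) ^+ 2) * - sin (atan (y / x)) = y.
    rewrite sin_atan_cos; move: (cA (y / x)).
    set S := Num.sqrt _; set C := cos _ => c1; split.
      rewrite (_ : - x * S * - C = x * (S * C)); last by ring.
      by rewrite c1 mulr1.
    rewrite (_ : - x * S * - (y / x * C) = x * (y / x) * (S * C)); last by ring.
    by rewrite c1 mulr1 mulrC divfK.
  case: (lerP 0 y) => _.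
    by rewrite sinDpi cosDpi sqrt_sum_sqr // ltr0_norm.
  have subpi : forall a : R, sin (a - pi) = - sin a /\ cos (a - pi) = - cos a.
    move=> a; have := sinDpi (a - pi); have := cosDpi (a - pi).
    by rewrite subrK => -> ->; rewrite !opprK.
  have [-> ->] := subpi (atan (y / x)).
  by rewrite sqrt_sum_sqr // ltr0_norm.
have -> : x = 0 by apply/eqP; rewrite eq_le xn xp.
rewrite expr0n /= add0r sqrtr_sqr.
case: (ltrP 0 y) => [yp|yn].
  by rewrite cos_pihalf sin_pihalf mulr0 mulr1 gtr0_norm.
case: (ltrP y 0) => [yn'|yp].
  by rewrite cosN sinN cos_pihalf sin_pihalf mulr0 mulrN1 ltr0_norm // opprK.
have -> : y = 0 by apply/eqP; rewrite eq_le yn yp.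
by rewrite normr0 !mul0r.
Qed.

Lemma quad_trig (al be ga x : R) :
  al * cos x ^+ 2 + 2 * be * cos x * sin x + ga * sin x ^+ 2 =
  (al + ga) / 2 + Num.sqrt (((al - ga) / 2) ^+ 2 + be ^+ 2) *
     cos (2 * x - arctan2 be ((al - ga) / 2)).
Proof.
have [] := arctan2_polar be ((al - ga) / 2).
set S := Num.sqrt _; set p := arctan2 _ _ => h1 h2.
rewrite cosB (_ : S * (cos (2 * x) * cos p + sin (2 * x) * sin p) =
   cos (2 * x) * (S * cos p) + sin (2 * x) * (S * sin p)); last by ring.
have -> : 2 * x = x *+ 2 by rewrite mulr_natl.
rewrite h1 h2 cos_mulr2n sin_mulr2n sin2cos2.
by rewrite !mulr2n; field.
Qed.

End HarmonicAddition.

Lemma trmul_entry (F : pzRingType) m n p (A : 'M[F]_(m, n)) (B : 'M[F]_(m, p)) i j :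
  (A^T *m B) i j = \sum_a A a i * B a j.
Proof. by rewrite !mxE; apply: eq_bigr => a _; rewrite mxE. Qed.

Section LossInTheta.
Context {R : realType} {d k l : nat}.
Implicit Types (X : 'M[R]_(d, l)) (H Y : 'M[R]_(d, k)).

Lemma alpha_sum X H Y j : alphaq X H Y j = \sum_a ((X^T *m H) a j) ^+ 2.
Proof.
rewrite /alphaq -!mulmxA mulmxA -[H^T *m X]trmxK trmx_mul trmxK trmul_entry.
by apply: eq_bigr => a _; rewrite expr2.
Qed.

Lemma gamma_sum X H Y j : gammaq X H Y j = \sum_a ((X^T *m Y) a j) ^+ 2.
Proof.
rewrite /gammaq -!mulmxA mulmxA -[Y^T *m X]trmxK trmx_mul trmxK trmul_entry.
by apply: eq_bigr => a _; rewrite expr2.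
Qed.

Lemma beta_sum X H Y j : betaq X H Y j = \sum_a (X^T *m Y) a j * (X^T *m H) a j.
Proof.
by rewrite /betaq -!mulmxA mulmxA -[Y^T *m X]trmxK trmx_mul trmxK trmul_entry.
Qed.

Lemma frob2_Ugeo X H Y th t :
  frob2 (X^T *m Ugeo H Y th t) =
  \sum_j (alphaq X H Y j * cos (th 0 j * t) ^+ 2
          + 2 * betaq X H Y j * cos (th 0 j * t) * sin (th 0 j * t)
          + gammaq X H Y j * sin (th 0 j * t) ^+ 2).
Proof.
rewrite /frob2 exchange_big /=; apply: eq_bigr => j _.
rewrite alpha_sum beta_sum gamma_sum big_distrr /= !big_distrl /= -!big_split /=.
apply: eq_bigr => a _.
by rewrite /Ugeo mulmxDr !mulmxA /Defs.cosD /Defs.sinD !mul_mx_diag !mxE; ring.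
Qed.

Lemma loss_theta_form {T} (X : 'I_T -> 'M[R]_(d, l)) (ts : 'I_T -> R) H Y th :
  loss X ts H Y th = \sum_j (\sum_i - ((alphaq (X i) H Y j + gammaq (X i) H Y j) / 2)
     + \sum_i - rq (X i) H Y j * cos (2 * th 0 j * ts i - phiq (X i) H Y j)).
Proof.
rewrite /loss; under eq_bigr do rewrite frob2_Ugeo.
rewrite exchange_big /= -sumrN; apply: eq_bigr => j _.
rewrite -big_split -sumrN /=; apply: eq_bigr => i _.
by rewrite quad_trig /rq /phiq opprD mulNr -(mulrA 2).
Qed.

(* Step (ii) does not increase the loss: every inner step is a
   majorisation-minimisation step for the coordinate it updates. *)
Lemma theta_update_nonincr {T} (X : 'I_T -> 'M[R]_(d, l)) (ts : 'I_T -> R)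
  (Minner : nat) H Y (th : 'rV[R]_k) : (forall i, 0 < ts i) ->
  loss X ts H Y (theta_update X ts Minner H Y th) <= loss X ts H Y th.
Proof.
move=> t0; rewrite !loss_theta_form; apply: ler_sum => j _; rewrite lerD2l mxE.
set F := fun x => \sum_i - rq (X i) H Y j * cos (2 * x * ts i - phiq (X i) H Y j).
apply: (@iter_nonincr _ _ F) => y.
apply: (@mm_step_nonincr _ T (fun i => rq (X i) H Y j) (fun i => phiq (X i) H Y j)
  ts y _ t0) => // i.
exact: sqrtr_ge0.
Qed.

End LossInTheta.

Section Procrustes.
Context {R : realType}.

Lemma frob2_tr {m n} (A : 'M[R]_(m, n)) : frob2 A = \tr (A^T *m A).
Proof.
rewrite /frob2 /mxtrace exchange_big /=; apply: eq_bigr => j _.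
by rewrite trmul_entry; apply: eq_bigr => a _; rewrite expr2.
Qed.

Lemma frob2_minorant {m n} (A B : 'M[R]_(m, n)) :
  2 * \tr (A^T *m B) - frob2 A <= frob2 B.
Proof.
have h : 0 <= frob2 (B - A).
  by apply: sumr_ge0 => i _; apply: sumr_ge0 => j _; apply: sqr_ge0.
rewrite !frob2_tr !raddfB /= !mulmxBl !raddfB /= in h *.
have e : \tr (B^T *m A) = \tr (A^T *m B) by rewrite -mxtrace_tr trmx_mul trmxK.
rewrite e in h; lra.
Qed.

(* For orthonormal columns W, Q and orthogonal V, the diagonal entries of
   W^T Q V are at most 1 (Cauchy-Schwarz on two unit columns). *)
Lemma stiefel_diag_le1 {d p} (W Q : 'M[R]_(d, p)) (V : 'M[R]_p) q :
  stiefel W -> stiefel Q -> V^T *m V = 1%:M -> (W^T *m Q *m V) q q <= 1.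
Proof.
move=> hW hQ hV.
have unitW : \sum_a W a q ^+ 2 = 1.
  have : (W^T *m W) q q = 1 by rewrite hW mxE eqxx.
  by rewrite trmul_entry => <-; apply: eq_bigr => a _; rewrite expr2.
have unitQV : \sum_a (Q *m V) a q ^+ 2 = 1.
  have : ((Q *m V)^T *m (Q *m V)) q q = 1.
    by rewrite trmx_mul -mulmxA (mulmxA Q^T) hQ mul1mx hV mxE eqxx.
  by rewrite trmul_entry => <-; apply: eq_bigr => a _; rewrite expr2.
rewrite -mulmxA trmul_entry.
have : \sum_a 2 * (W a q * (Q *m V) a q) <= \sum_a (W a q ^+ 2 + (Q *m V) a q ^+ 2).
  by apply: ler_sum => a _; have := sqr_ge0 (W a q - (Q *m V) a q); lra.
rewrite big_split /= unitW unitQV -mulr_sumr; lra.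
Qed.

Lemma svd_pairing {d p} (M W Q : 'M[R]_(d, p)) (S V : 'M[R]_p) :
  is_diag_mx S -> M = W *m S *m V^T ->
  \tr (M^T *m Q) = \sum_q S q q * (W^T *m Q *m V) q q.
Proof.
move=> /is_diag_mxP Sd ->; rewrite !trmx_mul trmxK -!mulmxA mxtrace_mulC -!mulmxA.
rewrite /mxtrace; apply: eq_bigr => q _.
rewrite trmul_entry (bigD1 q) //= big1 ?addr0 ?mulmxA // => a aq.
by rewrite Sd ?mul0r.
Qed.

Lemma polar_factor_max {d p} (M W Q : 'M[R]_(d, p)) (S V : 'M[R]_p) :
  thin_svd M W S V -> stiefel Q -> \tr (M^T *m Q) <= \tr (M^T *m (W *m V^T)).
Proof.
move=> [hW hV Sd Spos hM] hQ.
rewrite (svd_pairing M W Q S V Sd hM) (svd_pairing M W (W *m V^T) S V Sd hM).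
apply: ler_sum => q _.
rewrite -mulmxA mulmxA (mulmxA W^T) hW mul1mx hV [X in _ <= _ * X]mxE eqxx mulr1.
by rewrite -[X in _ <= X]mulr1; apply: ler_wpM2l => //; apply: stiefel_diag_le1.
Qed.

Lemma stiefel_polar {d p} (W : 'M[R]_(d, p)) (V : 'M[R]_p) :
  stiefel W -> V^T *m V = 1%:M -> stiefel (W *m V^T).
Proof.
move=> hW hV; rewrite /stiefel trmx_mul trmxK -mulmxA (mulmxA W^T) hW mul1mx.
exact: mulmx1C.
Qed.

End Procrustes.

Section HYStep.
Context {R : realType} {d k l T : nat}.
Variables (X : 'I_T -> 'M[R]_(d, l)) (ts : 'I_T -> R).

Definition trig_block (th : 'rV[R]_k) (t : R) : 'M[R]_(k + k, k) :=
  col_mx (Defs.cosD th t) (Defs.sinD th t).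

Lemma Ugeo_block (H Y : 'M[R]_(d, k)) th t : Ugeo H Y th t = row_mx H Y *m trig_block th t.
Proof. by rewrite /trig_block mul_row_col. Qed.

Lemma Mmat_pairing (H Y : 'M[R]_(d, k)) th (Q : 'M[R]_(d, k + k)) :
  \tr ((Mmat X ts H Y th)^T *m Q) =
  \sum_i \tr (((X i)^T *m Ugeo H Y th (ts i))^T *m ((X i)^T *m (Q *m trig_block th (ts i)))).
Proof.
rewrite /Mmat raddf_sum mulmx_suml raddf_sum; apply: eq_bigr => i _ /=.
rewrite -mul_mx_row trmx_mul tr_row_mx /Defs.cosD /Defs.sinD !tr_diag_mx.
rewrite -/(Defs.cosD th (ts i)) -/(Defs.sinD th (ts i)) -/(trig_block th (ts i)).
by rewrite -mulmxA mxtrace_mulC -mulmxA !trmx_mul !trmxK !mulmxA.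
Qed.

(* Step (i) does not increase the loss, provided the current [H Y] is
   orthonormal: the loss at Q' is bounded via the linear minorant by
   -(2 tr(M^T Q') - tr(M^T Q)), and Q' = W V^T maximises tr(M^T Q'). *)
Lemma HY_update_nonincr (H0 Y0 H1 Y1 : 'M[R]_(d, k)) th (W : 'M[R]_(d, k + k))
  (S V : 'M[R]_(k + k)) :
  stiefel (row_mx H0 Y0) -> thin_svd (Mmat X ts H0 Y0 th) W S V ->
  row_mx H1 Y1 = W *m V^T ->
  loss X ts H1 Y1 th <= loss X ts H0 Y0 th.
Proof.
move=> hQ0 hsvd hQ1.
have pair0 : \tr ((Mmat X ts H0 Y0 th)^T *m row_mx H0 Y0) =
    \sum_i frob2 ((X i)^T *m Ugeo H0 Y0 th (ts i)).
  by rewrite Mmat_pairing; apply: eq_bigr => i _; rewrite -Ugeo_block frob2_tr.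
have pair1 : \tr ((Mmat X ts H0 Y0 th)^T *m row_mx H1 Y1) =
    \sum_i \tr (((X i)^T *m Ugeo H0 Y0 th (ts i))^T *m ((X i)^T *m Ugeo H1 Y1 th (ts i))).
  by rewrite Mmat_pairing; apply: eq_bigr => i _; rewrite -Ugeo_block.
have improve := polar_factor_max _ _ _ _ _ hsvd hQ0; rewrite -hQ1 pair0 pair1 in improve.
have minor : \sum_i (2 * \tr (((X i)^T *m Ugeo H0 Y0 th (ts i))^T
                               *m ((X i)^T *m Ugeo H1 Y1 th (ts i)))
                     - frob2 ((X i)^T *m Ugeo H0 Y0 th (ts i)))
             <= \sum_i frob2 ((X i)^T *m Ugeo H1 Y1 th (ts i)).
  by apply: ler_sum => i _; apply: frob2_minorant.
rewrite sumrB -mulr_sumr in minor.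
rewrite /loss lerN2; apply: le_trans minor; lra.
Qed.

End HYStep.

Lemma gse_iterates_stiefel (R : realType) d k l T (X : 'I_T -> 'M[R]_(d, l))
  (ts : 'I_T -> R) (Minner : nat) (H Y : nat -> 'M[R]_(d, k)) (th : nat -> 'rV[R]_k) :
  stiefel (row_mx (H 0%N) (Y 0%N)) -> gse_iterates X ts Minner H Y th ->
  forall n, stiefel (row_mx (H n) (Y n)).
Proof.
move=> h0 hiter [//|n].
have [[W [S [V [[hW hV _ _ _] ->]]]] _] := hiter n.+1 isT.
exact: stiefel_polar.
Qed.

Theorem theorem1 (R : realType) (d k l T Minner : nat)
  (hd : (0 < d)%N) (hk : (0 < k)%N) (hl : (0 < l)%N) (hT : (0 < T)%N)
  (hM : (1 <= Minner)%N) (hkd : (2 * k <= d)%N)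
  (X : 'I_T -> 'M[R]_(d, l)) (ts : 'I_T -> R)
  (hts : forall i, 0 < ts i <= 1)
  (H Y : nat -> 'M[R]_(d, k)) (th : nat -> 'rV[R]_k)
  (hinit : stiefel (row_mx (H 0%N) (Y 0%N)))
  (hiter : gse_iterates X ts Minner H Y th) :
  forall n : nat, (1 <= n)%N ->
    loss X ts (H n) (Y n) (th n) <= loss X ts (H n.-1) (Y n.-1) (th n.-1).
Proof.
move=> n hn.
have ts_pos : forall i, 0 < ts i by move=> i; case/andP: (hts i).
have [[W [S [V [hsvd hpolar]]]] ->] := hiter n hn.
apply: le_trans (theta_update_nonincr X ts Minner (H n) (Y n) (th n.-1) ts_pos) _.
apply: HY_update_nonincr hsvd hpolar.
exact: gse_iterates_stiefel hinit hiter n.-1.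
Qed.
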